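(* Let $R$ be a poset and $P$ a join-semilattice with a least element. The following are equivalent: (i) there is an order-embedding of $I(R)$ into $J(P)$ which preserves arbitrary joins; (ii) there is an order-embedding of $I(R)$ into $J(P)$; (iii) there is a map $g:I_{<\omega}(R)\to P$ such that for all $X,Y_1,\dots,Y_n\in I_{<\omega}(R)$: if $X\not\subseteq Y_1\cup\dots\cup Y_n$ then $g(X)\not\le g(Y_1)\vee\dots\vee g(Y_n)$; (iv) there is a map $h:R\to P$ such that for all $x,y_1,\dots,y_n\in R$: if $x\not\le y_i$ for every $1\le i\le n$, then $h(x)\not\le h(y_1)\vee\dots\vee h(y_n)$.
   Context: $I(R)$ is the set of initial segments of $R$ ordered by inclusion; $I_{<\omega}(R)$ is the set of finitely generated initial segments of $R$, i.e. those of the form $\downarrow A=\{x\in R:\exists a\in A,\ x\le a\}$ with $A$ finite. An ideal of $P$ is a non-empty up-directed initial segment; $J(P)$ is the set of ideals of $P$ ordered by inclusion. An order-embedding $f$ satisfies $x\le y\iff f(x)\le f(y)$. *)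

From Stdlib Require List.
From mathcomp Require Import all_boot all_order.
Set Implicit Arguments. Unset Strict Implicit. Unset Printing Implicit Defensive.
Import Order.TTheory.
Local Open Scope order_scope.

Definition subset_of {T : Type} (A B : T -> Prop) := forall x, A x -> B x.

Section Defs.
Context {dR : Order.disp_t} (R : porderType dR).
Context {dP : Order.disp_t} (P : bJoinSemilatticeType dP).

Definition init_seg (A : R -> Prop) := forall x y : R, y <= x -> A x -> A y.

Record iseg := ISeg { iset :> R -> Prop; iset_init : init_seg iset }.

Definition fin_gen (A : R -> Prop) :=
  exists s : seq R, forall x, A x <-> exists2 a, a \in s & x <= a.
Record fgiseg := FGISeg { fgset :> R -> Prop; fgset_gen : fin_gen fgset }.

Definition is_ideal (J : P -> Prop) :=
  [/\ exists x, J x,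
      (forall x y : P, y <= x -> J x -> J y) &
      (forall x y, J x -> J y -> exists z, [/\ J z, x <= z & y <= z])].
Record ideal := Ideal { idset :> P -> Prop; idset_ideal : is_ideal idset }.

Definition order_embedding (f : iseg -> ideal) :=
  forall A B : iseg, subset_of (f A) (f B) <-> subset_of A B.

(* f preserves arbitrary joins: for every family S of initial segments,
   the image of its join (= union) is the least upper bound in J(P)
   (under inclusion) of the images of the members of S. *)
Definition preserves_joins (f : iseg -> ideal) :=
  forall (S : iseg -> Prop) (U : iseg),
    (forall x, U x <-> exists2 A : iseg, S A & A x) ->
    (forall A, S A -> subset_of (f A) (f U)) /\
    (forall J : ideal, (forall A, S A -> subset_of (f A) J) -> subset_of (f U) J).

Definition cond_iii (g : fgiseg -> P) :=
  forall (X : fgiseg) (Ys : seq fgiseg),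
    ~ (subset_of X (fun x => exists2 Y : fgiseg, List.In Y Ys & Y x)) ->
    ~ (g X <= \join_(Y <- Ys) g Y).

Definition cond_iv (h : R -> P) :=
  forall (x : R) (ys : seq R),
    (forall y, y \in ys -> ~~ (x <= y)) ->
    ~ (h x <= \join_(y <- ys) h y).
End Defs.

From mathcomp Require Import all_boot all_order.
From Stdlib Require Import Classical ClassicalEpsilon.
From Stdlib Require List.
Set Implicit Arguments. Unset Strict Implicit. Unset Printing Implicit Defensive.
Local Open Scope order_scope.
Import Order.TTheory.

(* (iv) => (i): send an initial segment A to the ideal of P generated by h(A);
   condition (iv) says precisely that h(x) lies in the ideal generated by
   h(y_1), ..., h(y_n) only if x lies below some y_i, so this map reflects
   inclusion, and it preserves unions because ideals are closed under finite
   joins.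
   (ii) => (iv): an order-embedding f cannot map the principal segment of x
   into the image of the segment {y | ~ x <= y}, so we may choose h(x) in the
   difference.  If x is below no y_i, the segment generated by y_1, ..., y_n
   lies inside {y | ~ x <= y}, hence its image contains the join of the h(y_i)
   but not h(x).
   (iii) and (iv) are interchanged through principal segments and finite
   generating sets. *)

Section BigJoinIn.
Context {d : Order.disp_t} (P : bJoinSemilatticeType d) (I : Type).
Implicit Types (s t : seq I) (F : I -> P).

Lemma join_In_le s F (x : P) :
  (forall i, List.In i s -> F i <= x) -> \join_(i <- s) F i <= x.
Proof.
elim: s => [|a s IH] Fx; first by rewrite big_nil le0x.
by rewrite big_cons leUx Fx /= ?IH // => [i si|]; [apply: Fx; right | left].
Qed.

Lemma le_join_In s F i : List.In i s -> F i <= \join_(j <- s) F j.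
Proof.
elim: s => [|a s IH] //= [<-|si]; rewrite big_cons; first exact: leUl.
exact: le_trans (IH si) (leUr _ _).
Qed.

Lemma join_In_subset s t F :
  (forall i, List.In i s -> List.In i t) -> \join_(i <- s) F i <= \join_(i <- t) F i.
Proof. by move=> st; apply: join_In_le => i /st; apply: le_join_In. Qed.

Lemma ideal_join_In (J : ideal P) s F :
  (forall i, List.In i s -> J (F i)) -> J (\join_(i <- s) F i).
Proof.
case: J => J [[x0 Jx0] Jdown Jdir] /=.
elim: s => [|a s IH] JF; first by rewrite big_nil; apply: Jdown Jx0; apply: le0x.
have [z [Jz az sz]] := Jdir _ _ (JF a (or_introl erefl))
  (IH (fun i si => JF i (or_intror si))).
by rewrite big_cons; apply: Jdown Jz; rewrite leUx az sz.
Qed.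
End BigJoinIn.

Lemma In_mem (T : eqType) (x : T) (s : seq T) : List.In x s <-> x \in s.
Proof.
elim: s => [|a s IH] /=; first by rewrite in_nil.
rewrite in_cons; split=> [[->|/IH->]|/orP[/eqP->|/IH]]; rewrite ?eqxx ?orbT //.
- by left.
- by right.
Qed.

Section Segments.
Context {d : Order.disp_t} (R : porderType d).

Definition down_iseg (x : R) : iseg R :=
  ISeg (fun y z (zy : z <= y) (yx : y <= x) => le_trans zy yx).

Definition not_above_iseg (x : R) : iseg R :=
  @ISeg _ R (fun y => ~ x <= y) (fun y z zy nxy xz => nxy (le_trans xz zy)).

Definition down_seq_iseg (ys : seq R) : iseg R :=
  @ISeg _ R (fun z => exists2 y, List.In y ys & z <= y)
    (fun z w wz '(ex_intro2 y ys zy) => ex_intro2 _ _ y ys (le_trans wz zy)).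

Lemma down_fin_gen (x : R) : fin_gen (down_iseg x).
Proof.
exists [:: x] => y; split=> [yx|[a]]; first by exists x; rewrite ?mem_seq1.
by rewrite mem_seq1 => /eqP->.
Qed.

Definition down_fgiseg (x : R) : fgiseg R := FGISeg (down_fin_gen x).

Lemma down_seq_not_above (x : R) (ys : seq R) :
  (forall y, y \in ys -> ~~ (x <= y)) ->
  subset_of (down_seq_iseg ys) (not_above_iseg x).
Proof.
move=> nxys z [y /In_mem /nxys /negP nxy zy] xz.
exact: nxy (le_trans xz zy).
Qed.

Lemma fgiseg_generators :
  exists gen : fgiseg R -> seq R,
    forall (X : fgiseg R) x, X x <-> exists2 a, a \in gen X & x <= a.
Proof. exact: (choice _ (fun X => fgset_gen X)). Qed.
End Segments.

Section EmbeddingToCondIV.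
Context {dR : Order.disp_t} (R : porderType dR).
Context {dP : Order.disp_t} (P : bJoinSemilatticeType dP).
Variable f : iseg R -> ideal P.
Hypothesis f_emb : order_embedding f.

Lemma embedding_separates (x : R) :
  exists p, f (down_iseg x) p /\ ~ f (not_above_iseg x) p.
Proof.
apply: NNPP => nsep.
have sub : subset_of (f (down_iseg x)) (f (not_above_iseg x)).
  by move=> p fxp; apply: NNPP => nfp; apply: nsep; exists p.
exact: (f_emb _ _).1 sub x (lexx x) (lexx x).
Qed.

Lemma embedding_cond_iv : exists h : R -> P, cond_iv h.
Proof.
have [h hP] := choice _ embedding_separates.
exists h => x ys nxys hle.
have fys : f (down_seq_iseg ys) (\join_(y <- ys) h y).
  apply: ideal_join_In => y ys_y.
  by apply: (f_emb (down_iseg y) _).2 (hP y).1 => z zy; exists y.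
have fx : f (down_seq_iseg ys) (h x).
  by case: (idset_ideal (f (down_seq_iseg ys))) => _ fdown _; apply: fdown fys.
exact: (hP x).2 ((f_emb _ _).2 (down_seq_not_above nxys) _ fx).
Qed.
End EmbeddingToCondIV.

Section CondIIIandIV.
Context {dR : Order.disp_t} (R : porderType dR).
Context {dP : Order.disp_t} (P : bJoinSemilatticeType dP).

Lemma cond_iii_down (g : fgiseg R -> P) :
  cond_iii g -> cond_iv (fun x => g (down_fgiseg x)).
Proof.
move=> gP x ys nxys hle; apply: (gP (down_fgiseg x) [seq down_fgiseg y | y <- ys]).
  move=> /(_ x (lexx x)) [_ /List.in_map_iff [y [<- /In_mem ys_y]] xy].
  by move/negP: (nxys y ys_y).
by rewrite big_map.
Qed.

Lemma cond_iv_generators (h : R -> P) (gen : fgiseg R -> seq R) :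
  (forall (X : fgiseg R) x, X x <-> exists2 a, a \in gen X & x <= a) ->
  cond_iv h -> cond_iii (fun X => \join_(a <- gen X) h a).
Proof.
move=> genP hP X Ys nXYs hle.
have [x [Xx nYx]] : exists x, X x /\ ~ exists2 Y, List.In Y Ys & Y x.
  by apply: NNPP => nx; apply: nXYs => x Xx; apply: NNPP => nYx; apply: nx; exists x.
have [a /In_mem genXa xa] := (genP X x).1 Xx.
apply: (hP a (List.flat_map gen Ys)).
  move=> b /In_mem /List.in_flat_map [Y [Ys_Y genYb]]; apply/negP => ab.
  by apply: nYx; exists Y => //; apply/genP; exists b; rewrite -?In_mem ?(le_trans xa).
apply: le_trans (le_join_In h genXa) (le_trans hle _).
apply: join_In_le => Y Ys_Y; apply: join_In_le => b genYb.
by apply: le_join_In; apply/List.in_flat_map; exists Y.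
Qed.
End CondIIIandIV.

Section CondIVToEmbedding.
Context {dR : Order.disp_t} (R : porderType dR).
Context {dP : Order.disp_t} (P : bJoinSemilatticeType dP).
Variable h : R -> P.

Definition gen_ideal_set (A : R -> Prop) (p : P) :=
  exists s : seq R, (forall a, List.In a s -> A a) /\ p <= \join_(a <- s) h a.

Lemma gen_ideal_set_ideal (A : R -> Prop) : is_ideal (gen_ideal_set A).
Proof.
split.
- by exists \bot, [::]; rewrite big_nil.
- by move=> p q qp [s [As ps]]; exists s; split=> //; apply: le_trans qp ps.
- move=> p q [s [As ps]] [t [At qt]]; exists (\join_(a <- s ++ t) h a); split.
  + exists (s ++ t); split=> // a sta.
    by case: (List.in_app_or _ _ _ sta); [apply: As | apply: At].
  + apply: le_trans ps _; apply: join_In_subset => a sa.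
    by apply: List.in_or_app; left.
  + apply: le_trans qt _; apply: join_In_subset => a ta.
    by apply: List.in_or_app; right.
Qed.

Definition gen_ideal (A : iseg R) : ideal P := Ideal (gen_ideal_set_ideal A).

Lemma gen_ideal_point (A : R -> Prop) (a : R) : A a -> gen_ideal_set A (h a).
Proof.
by move=> Aa; exists [:: a]; split=> [b [<-|[]] //|]; apply: le_join_In; left.
Qed.

Lemma gen_ideal_embedding : cond_iv h -> order_embedding gen_ideal.
Proof.
move=> hP A B; split=> [AB x Ax|AB p [s [As ps]]]; last first.
  by exists s; split=> // a /As /AB.
have [t [Bt hxt]] := AB _ (gen_ideal_point Ax).
have [y ty xy] : exists2 y, y \in t & x <= y.
  apply: NNPP => nxt; apply: (hP x t _ hxt) => y ty; apply/negP => xy.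
  by apply: nxt; exists y.
exact (iset_init xy (Bt y (proj2 (In_mem _ _) ty))).
Qed.

Lemma gen_ideal_preserves_joins : preserves_joins gen_ideal.
Proof.
move=> S U UP; split=> [A SA p [s [As ps]]|J SJ p [s [Us ps]]].
  by exists s; split=> // a /As Aa; apply/UP; exists A.
case: (idset_ideal J) => _ Jdown _; apply: Jdown ps _.
apply: ideal_join_In => a /Us /UP [A SA Aa].
exact: SJ A SA _ (gen_ideal_point Aa).
Qed.
End CondIVToEmbedding.

Theorem lemma1p2 (dR : Order.disp_t) (R : porderType dR)
  (dP : Order.disp_t) (P : bJoinSemilatticeType dP) :
  [/\ ((exists f : iseg R -> ideal P, order_embedding f /\ preserves_joins f)
        <-> (exists f : iseg R -> ideal P, order_embedding f)),
      ((exists f : iseg R -> ideal P, order_embedding f)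
        <-> (exists g : fgiseg R -> P, cond_iii g)) &
      ((exists g : fgiseg R -> P, cond_iii g)
        <-> (exists h : R -> P, cond_iv h))].
Proof.
have ii_iv (f : iseg R -> ideal P) :
    order_embedding f -> exists h : R -> P, cond_iv h.
  exact: embedding_cond_iv.
have iv_i (h : R -> P) :
    cond_iv h -> exists f : iseg R -> ideal P, order_embedding f /\ preserves_joins f.
  by exists (gen_ideal h); split;
    [apply: gen_ideal_embedding | apply: gen_ideal_preserves_joins].
have iii_iv (g : fgiseg R -> P) : cond_iii g -> exists h : R -> P, cond_iv h.
  by exists (fun x => g (down_fgiseg x)); apply: cond_iii_down.
have iv_iii (h : R -> P) : cond_iv h -> exists g : fgiseg R -> P, cond_iii g.
  have [gen genP] := @fgiseg_generators _ R.
  by exists (fun X => \join_(a <- gen X) h a); apply: cond_iv_generators.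
split; split.
- by move=> [f [fP _]]; exists f.
- by move=> [f /ii_iv [h /iv_i]].
- by move=> [f /ii_iv [h /iv_iii]].
- by move=> [g /iii_iv [h /iv_i [f [fP _]]]]; exists f.
- by move=> [g /iii_iv].
- by move=> [h /iv_iii].
Qed.
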